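(* Let $\mathcal{L},\mathcal{L}'$ be intuitionistic abstract logics and $h:\mathcal{L}\to\mathcal{L}'$ a strongly stable logic map. Then $h$ is a morphism of the associated Heyting algebras: for all $a,b\in Expr_{\mathcal{L}}$, $h(a\wedge b)=h(a)\wedge' h(b)$, $h(a\vee b)=h(a)\vee' h(b)$ and $h(a\to b)=h(a)\to' h(b)$, where equality is equality in the Heyting algebra $(Expr_{\mathcal{L}'},\le')$ (i.e. mutual $\le'$).
   Context: An abstract logic is a triple $\mathcal{L}=(Expr_{\mathcal{L}},Th_{\mathcal{L}},\mathcal{C}_{\mathcal{L}})$ where $Expr_{\mathcal{L}}$ is a set, $Th_{\mathcal{L}}$ a non-empty set of subsets of $Expr_{\mathcal{L}}$ (theories) closed under intersections of non-empty subfamilies, and $\mathcal{C}_{\mathcal{L}}$ a set of operations on $Expr_{\mathcal{L}}$. $\mathcal{L}$ is closed under union of chains if the union of every non-empty chain of theories is a theory. A theory $T$ is prime if $T=\bigcap\mathcal{T}$ with $\mathcal{T}\subseteq Th_{\mathcal{L}}$ non-empty finite implies $T\in\mathcal{T}$; totally prime if this holds for non-empty $\mathcal{T}$ of any size. $PTh_{\mathcal{L}}$, $TPTh_{\mathcal{L}}$ denote these sets. An intuitionistic abstract logic is one closed under union of chains with binary connectives $\vee,\wedge,\to$ and constants $\top,\bot$ such that for all $a,b$ and all $T\in TPTh_{\mathcal{L}}$: $a\vee b\in T$ iff $a\in T$ or $b\in T$; $a\wedge b\in T$ iff $a,b\in T$; $a\to b\in T$ iff for every totally prime $T'\supseteq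 T$, $a\in T'$ implies $b\in T'$; $\top$ lies in every theory and $\bot$ in none. The associated Heyting algebra is $(Expr_{\mathcal{L}},\le)$ with $a\le b$ iff every prime theory containing $a$ contains $b$, and operations $\wedge,\vee,\to,\bot,\top$ (elements with $a\le b\le a$ identified). A logic map $h:\mathcal{L}\to\mathcal{L}'$ is a function $Expr_{\mathcal{L}}\to Expr_{\mathcal{L}'}$ with $h^{-1}(T')\in Th_{\mathcal{L}}$ for all $T'\in Th_{\mathcal{L}'}$; it is strongly stable if $h^{-1}(P')\in PTh_{\mathcal{L}}$ for all $P'\in PTh_{\mathcal{L}'}$ and whenever $P'\in PTh_{\mathcal{L}'}$, $P\in PTh_{\mathcal{L}}$ with $h^{-1}(P')\subseteq P$, there is $Q'\in PTh_{\mathcal{L}'}$ with $P'\subseteq Q'$ and $h^{-1}(Q')=P$. *)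

From Stdlib Require Import List.
Import ListNotations.
Set Implicit Arguments.

Definition set_eq {E : Type} (A B : E -> Prop) : Prop := forall x, A x <-> B x.
Definition subset {E : Type} (A B : E -> Prop) : Prop := forall x, A x -> B x.

Definition bigcap {E : Type} (F : (E -> Prop) -> Prop) : E -> Prop :=
  fun x => forall T, F T -> T x.
Definition bigcup {E : Type} (F : (E -> Prop) -> Prop) : E -> Prop :=
  fun x => exists T, F T /\ T x.

(* Abstract logic (Expr, Th, C); the operations C relevant here are the
   intuitionistic connectives, stored in [IntLogic] below. *)
Record AbsLogic := {
  Expr : Type;
  Th : (Expr -> Prop) -> Prop;
  Th_nonempty : exists T, Th T;
  Th_inter : forall F : (Expr -> Prop) -> Prop,
      (exists T, F T) -> (forall T, F T -> Th T) -> Th (bigcap F)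
}.

Definition is_chain {E : Type} (C : (E -> Prop) -> Prop) : Prop :=
  forall A B, C A -> C B -> subset A B \/ subset B A.

Definition closed_union_chains (L : AbsLogic) : Prop :=
  forall C : (Expr L -> Prop) -> Prop,
    (exists T, C T) -> (forall T, C T -> Th L T) -> is_chain C ->
    Th L (bigcup C).

Definition prime_th (L : AbsLogic) (T : Expr L -> Prop) : Prop :=
  Th L T /\
  forall l : list (Expr L -> Prop),
    l <> [] -> (forall T', In T' l -> Th L T') ->
    set_eq T (bigcap (fun T' => In T' l)) ->
    exists T', In T' l /\ set_eq T' T.

Definition tprime_th (L : AbsLogic) (T : Expr L -> Prop) : Prop :=
  Th L T /\
  forall F : (Expr L -> Prop) -> Prop,
    (exists T', F T') -> (forall T', F T' -> Th L T') ->
    set_eq T (bigcap F) ->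
    exists T', F T' /\ set_eq T' T.

Record IntLogic := {
  base :> AbsLogic;
  il_chains : closed_union_chains base;
  il_or : Expr base -> Expr base -> Expr base;
  il_and : Expr base -> Expr base -> Expr base;
  il_imp : Expr base -> Expr base -> Expr base;
  il_top : Expr base;
  il_bot : Expr base;
  il_or_spec : forall a b T, tprime_th base T ->
      (T (il_or a b) <-> T a \/ T b);
  il_and_spec : forall a b T, tprime_th base T ->
      (T (il_and a b) <-> T a /\ T b);
  il_imp_spec : forall a b T, tprime_th base T ->
      (T (il_imp a b) <->
       forall T', tprime_th base T' -> subset T T' -> T' a -> T' b);
  il_top_spec : forall T, Th base T -> T il_top;
  il_bot_spec : forall T, Th base T -> ~ T il_bot
}.

Definition hle (L : AbsLogic) (a b : Expr L) : Prop :=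
  forall P, prime_th L P -> P a -> P b.

Definition heq (L : AbsLogic) (a b : Expr L) : Prop := hle L a b /\ hle L b a.

Definition preim {L L' : AbsLogic} (h : Expr L -> Expr L') (T' : Expr L' -> Prop)
  : Expr L -> Prop := fun x => T' (h x).

Definition logic_map (L L' : AbsLogic) (h : Expr L -> Expr L') : Prop :=
  forall T', Th L' T' -> Th L (preim h T').

Definition strongly_stable (L L' : AbsLogic) (h : Expr L -> Expr L') : Prop :=
  (forall P', prime_th L' P' -> prime_th L (preim h P')) /\
  (forall P' P, prime_th L' P' -> prime_th L P -> subset (preim h P') P ->
     exists Q', prime_th L' Q' /\ subset P' Q' /\ set_eq (preim h Q') P).

(** Every theory is the intersection of the totally prime theories containing
    it (Lindenbaum's lemma, via Zorn).  Since the intuitionistic connectives are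
    specified on totally prime theories, this lifts their specifications to all
    theories for [and] and [->], and to prime theories for [or]: a prime theory
    containing [a \/ b] but neither disjunct would be the intersection of the
    totally prime theories above it containing [a] and of those containing [b].
    A strongly stable map pulls prime theories back to prime theories, and its
    lifting property lets the totally prime theories quantified over in the
    clause for [->] be transported along [h]. *)

From Stdlib Require Import List Classical.
From mathcomp Require boolp classical_sets.
Import ListNotations.

Lemma set_eq_ext {E : Type} (A B : E -> Prop) : set_eq A B -> A = B.
Proof.
  intro HAB. apply boolp.funext; intro x. apply boolp.propext, HAB.
Qed.

(* The empty chain is not excluded by [Zorn_bigcup], so we apply it to the sets
   [U] whose union with [T0] lies in [S]. *)
Lemma zorn_above {E : Type} (S : (E -> Prop) -> Prop) (T0 : E -> Prop) :
  S T0 ->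
  (forall C, (exists U, C U) -> (forall U, C U -> S U) -> is_chain C ->
     S (bigcup C)) ->
  exists M, S M /\ subset T0 M /\ forall U, S U -> subset M U -> subset U M.
Proof.
  intros HT0 Hchain.
  set (join := fun (U : E -> Prop) y => T0 y \/ U y).
  destruct (@classical_sets.Zorn_bigcup E (fun U => S (join U))) as [A [HA Hmax]].
  - intros F HFS HF.
    destruct (classic (exists U, F U)) as [[U0 HU0] | Hempty].
    + replace (join _) with (bigcup (fun V => exists U, F U /\ V = join U)).
      * apply Hchain.
        -- exists (join U0), U0; auto.
        -- intros V [U [HU ->]]. exact (HFS U HU).
        -- intros V1 V2 [U1 [HU1 ->]] [U2 [HU2 ->]].
           destruct (HF U1 U2 HU1 HU2) as [H12 | H21];
             [left | right]; intros y [Hy | Hy]; unfold join; auto.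
      * apply set_eq_ext; intro y; split.
        -- intros [V [[U [HU ->]] [Hy | Hy]]]; [left | right]; auto.
           exists U; auto.
        -- intros [Hy | [U HU Hy]].
           ++ exists (join U0); split; [exists U0 | left]; auto.
           ++ exists (join U); split; [exists U | right]; auto.
    + replace (join _) with T0; [exact HT0 |].
      apply set_eq_ext; intro y; split; [left; auto |].
      intros [Hy | [U HU _]]; [exact Hy | contradiction Hempty; eauto].
  - exists (join A); split; [exact HA | split; [intros y Hy; left; exact Hy |]].
    intros U HU HAU. apply NNPP; intro HUA.
    apply (Hmax U); [split |].
    + intros y Hy. apply HAU. right; exact Hy.
    + intro HUA'. apply HUA. intros y Hy. right; auto.
    + replace (join U) with U; [exact HU |].
      apply set_eq_ext; intro y; split; [right; auto |].
      intros [Hy | Hy]; [apply HAU; left |]; auto.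
Qed.

Lemma tprime_th_prime_th {L : AbsLogic} {T : Expr L -> Prop} :
  tprime_th L T -> prime_th L T.
Proof.
  intros [HT Htp]. split; [exact HT |].
  intros l Hl Hl_th Heq. apply Htp; auto.
  destruct l as [| T' l]; [congruence | exists T'; left; reflexivity].
Qed.

Definition tprime_supsets_with {L : AbsLogic} (P : Expr L -> Prop) (a : Expr L)
  : (Expr L -> Prop) -> Prop :=
  fun Q => tprime_th L Q /\ subset P Q /\ Q a.

Lemma th_bigcap_tprime_supsets_with {L : AbsLogic} (P : Expr L -> Prop) (a : Expr L) :
  (exists Q, tprime_supsets_with P a Q) -> Th L (bigcap (tprime_supsets_with P a)).
Proof.
  intro Hne. apply Th_inter; [exact Hne |]. intros Q [HQ _]. exact (proj1 HQ).
Qed.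

Section Lindenbaum.

Context {L : AbsLogic} (L_chains : closed_union_chains L).

(* A theory maximal among those omitting [x] is totally prime: any family
   of strictly larger theories contains [x] in each member. *)
Lemma th_separation (P : Expr L -> Prop) (x : Expr L) :
  Th L P -> ~ P x -> exists Q, tprime_th L Q /\ subset P Q /\ ~ Q x.
Proof.
  intros HP Hx.
  destruct (zorn_above (fun U => Th L U /\ ~ U x) P (conj HP Hx))
    as [M [[HM HMx] [HPM Hmax]]].
  - intros C Hne HC Hchain. split.
    + apply L_chains; [exact Hne | intros U HU; apply HC, HU | exact Hchain].
    + intros [U [HU HUx]]. exact (proj2 (HC U HU) HUx).
  - exists M. split; [split; [exact HM |] | split; assumption].
    intros F Hne HF HMF. apply NNPP; intro Hnone. apply HMx, HMF.
    intros T HT. apply NNPP; intro HTx. apply Hnone. exists T; split; [exact HT |].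
    assert (HMT : subset M T) by (intros y Hy; exact (proj1 (HMF y) Hy T HT)).
    intro y; split; [apply Hmax; [split; [apply HF |] |] |]; auto.
Qed.

Lemma th_mem_tprime_supsets (P : Expr L -> Prop) (y : Expr L) :
  Th L P -> (forall Q, tprime_th L Q -> subset P Q -> Q y) -> P y.
Proof.
  intros HP Hy. apply NNPP; intro Hny.
  destruct (th_separation P y HP Hny) as [Q [HQ [HPQ HQy]]].
  exact (HQy (Hy Q HQ HPQ)).
Qed.

End Lindenbaum.

Section Connectives.

Variable L : IntLogic.

Lemma th_and (P : Expr L -> Prop) (a b : Expr L) :
  Th L P -> (P (il_and L a b) <-> P a /\ P b).
Proof.
  intro HP. split.
  - intro Hab. split; apply (th_mem_tprime_supsets (il_chains L) _ _ HP);
      intros Q HQ HPQ; apply (il_and_spec L a b HQ), HPQ, Hab.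
  - intros [Ha Hb]. apply (th_mem_tprime_supsets (il_chains L) _ _ HP).
    intros Q HQ HPQ. apply (il_and_spec L a b HQ); auto.
Qed.

Lemma th_imp (P : Expr L -> Prop) (a b : Expr L) :
  Th L P ->
  (P (il_imp L a b) <->
   forall T, tprime_th L T -> subset P T -> T a -> T b).
Proof.
  intro HP. split.
  - intros Hab T HT HPT.
    apply (proj1 (il_imp_spec L a b HT) (HPT _ Hab)); [exact HT | intros y Hy; exact Hy].
  - intro Hab. apply (th_mem_tprime_supsets (il_chains L) _ _ HP).
    intros Q HQ HPQ. apply (il_imp_spec L a b HQ).
    intros T HT HQT. apply Hab; [exact HT |]. intros y Hy; auto.
Qed.

Lemma th_modus_ponens (P : Expr L -> Prop) (a b : Expr L) :
  Th L P -> P (il_imp L a b) -> P a -> P b.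
Proof.
  intros HP Hab Ha. apply (th_mem_tprime_supsets (il_chains L) _ _ HP).
  intros Q HQ HPQ. exact (proj1 (th_imp P a b HP) Hab Q HQ HPQ (HPQ _ Ha)).
Qed.

Lemma prime_or (P : Expr L -> Prop) (a b : Expr L) :
  prime_th L P -> (P (il_or L a b) <-> P a \/ P b).
Proof.
  intros HPprime. pose proof (proj1 HPprime) as HP. split.
  - intro Hab. apply NNPP; intro Hn.
    assert (Ha : ~ P a) by tauto. assert (Hb : ~ P b) by tauto.
    set (Pa := bigcap (tprime_supsets_with P a)).
    set (Pb := bigcap (tprime_supsets_with P b)).
    assert (Hcases : forall Q, tprime_th L Q -> subset P Q -> Q a \/ Q b)
      by (intros Q HQ HPQ; apply (il_or_spec L a b HQ), HPQ, Hab).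
    assert (HPa : Th L Pa).
    { apply th_bigcap_tprime_supsets_with.
      destruct (th_separation (il_chains L) P b HP Hb) as [Q [HQ [HPQ HQb]]].
      exists Q; split; [exact HQ | split; [exact HPQ |]].
      destruct (Hcases Q HQ HPQ); tauto. }
    assert (HPb : Th L Pb).
    { apply th_bigcap_tprime_supsets_with.
      destruct (th_separation (il_chains L) P a HP Ha) as [Q [HQ [HPQ HQa]]].
      exists Q; split; [exact HQ | split; [exact HPQ |]].
      destruct (Hcases Q HQ HPQ); tauto. }
    assert (HPab : set_eq P (bigcap (fun T => In T [Pa; Pb]))).
    { intro y; split.
      - intros Hy T [<- | [<- | []]]; intros Q [_ [HPQ _]]; auto.
      - intro Hy. apply (th_mem_tprime_supsets (il_chains L) _ _ HP).
        intros Q HQ HPQ. destruct (Hcases Q HQ HPQ) as [HQa | HQb].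
        + exact (Hy Pa (or_introl eq_refl) Q (conj HQ (conj HPQ HQa))).
        + exact (Hy Pb (or_intror (or_introl eq_refl)) Q (conj HQ (conj HPQ HQb))). }
    destruct (proj2 HPprime [Pa; Pb]) as [T [HT HTP]];
      [discriminate | intros T [<- | [<- | []]]; assumption | exact HPab |].
    destruct HT as [<- | [<- | []]].
    + apply Ha, (proj1 (HTP a)). intros Q [_ [_ HQ]]; exact HQ.
    + apply Hb, (proj1 (HTP b)). intros Q [_ [_ HQ]]; exact HQ.
  - intro Hab. apply (th_mem_tprime_supsets (il_chains L) _ _ HP).
    intros Q HQ HPQ. apply (il_or_spec L a b HQ).
    destruct Hab; [left | right]; auto.
Qed.

End Connectives.

Section StronglyStable.

Context {L L' : IntLogic} {h : Expr L -> Expr L'} (h_stable : strongly_stable L L' h).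

Lemma preim_prime_th {P' : Expr L' -> Prop} :
  prime_th L' P' -> Th L (preim h P').
Proof. intro HP'. exact (proj1 (proj1 h_stable P' HP')). Qed.

Lemma strongly_stable_and (a b : Expr L) :
  heq L' (h (il_and L a b)) (il_and L' (h a) (h b)).
Proof.
  split; intros P' HP' Hab.
  - apply (th_and L' P' _ _ (proj1 HP')).
    exact (proj1 (th_and L (preim h P') a b (preim_prime_th HP')) Hab).
  - apply (th_and L' P' _ _ (proj1 HP')) in Hab.
    exact (proj2 (th_and L (preim h P') a b (preim_prime_th HP')) Hab).
Qed.

Lemma strongly_stable_or (a b : Expr L) :
  heq L' (h (il_or L a b)) (il_or L' (h a) (h b)).
Proof.
  split; intros P' HP' Hab; pose proof (proj1 h_stable P' HP') as HPprime.
  - apply (prime_or L' P' _ _ HP').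
    exact (proj1 (prime_or L (preim h P') a b HPprime) Hab).
  - apply (prime_or L' P' _ _ HP') in Hab.
    exact (proj2 (prime_or L (preim h P') a b HPprime) Hab).
Qed.

Lemma strongly_stable_imp (a b : Expr L) :
  heq L' (h (il_imp L a b)) (il_imp L' (h a) (h b)).
Proof.
  split; intros P' HP' Hab.
  - apply (th_imp L' P' _ _ (proj1 HP')). intros T' HT' HPT' Ha.
    apply (th_modus_ponens L (preim h T') a b);
      [apply preim_prime_th, tprime_th_prime_th, HT' | apply HPT', Hab | exact Ha].
  - change (preim h P' (il_imp L a b)).
    apply (th_imp L (preim h P') a b (preim_prime_th HP')). intros T HT HPT Ha.
    destruct (proj2 h_stable P' T HP' (tprime_th_prime_th HT) HPT)
      as [Q' [HQ' [HPQ' HQT]]].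
    apply (HQT b). apply (HQT a) in Ha.
    exact (th_modus_ponens L' Q' _ _ (proj1 HQ') (HPQ' _ Hab) Ha).
Qed.

End StronglyStable.

Theorem lemma4p6 (L L' : IntLogic) (h : Expr L -> Expr L') :
  logic_map L L' h -> strongly_stable L L' h ->
  forall a b : Expr L,
    heq L' (h (il_and L a b)) (il_and L' (h a) (h b)) /\
    heq L' (h (il_or L a b)) (il_or L' (h a) (h b)) /\
    heq L' (h (il_imp L a b)) (il_imp L' (h a) (h b)).
Proof.
  intros _ h_stable a b.
  split; [| split].
  - exact (strongly_stable_and h_stable a b).
  - exact (strongly_stable_or h_stable a b).
  - exact (strongly_stable_imp h_stable a b).
Qed.
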